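(* Let $V\subseteq B(H)\otimes N$ be a quantum multi-relation on $(M,N)$, where $M$ and $N$ are minimally represented on $H$ and $K$, and let $\mathcal{A}_{\mathcal{P}_V}$ and $\mathcal{A}_{\mathcal{S}_V}$ be its quantum multi-adjacency operator and weighted adjacency operator. Then $$(\mathrm{id}\otimes\mathrm{tr}_{L^2(N)})(\mathcal{A}_{\mathcal{P}_V})=\mathcal{A}_{\mathcal{S}_V}.$$
   Context: All Hilbert spaces are finite dimensional. $M\subseteq B(H)$, $N\subseteq B(K)$ are finite-dimensional von Neumann algebras, minimally represented: $M'=Z(M)$, $N'=Z(N)$. $A^{op}$ denotes the opposite algebra. A quantum multi-relation on $(M,N)$ is a subspace $V\subseteq B(H)\otimes N$ which is an $(M'\otimes1)$–$(M'\otimes1)$ bimodule with $(1\otimes Z(N))V\subseteq V$. Weaver action: $\pi(T_1\otimes T_2\otimes T_3\otimes T_4)(S_1\otimes S_2)=T_1S_1T_2\otimes T_3S_2T_4$ of $M\otimes M^{op}\otimes N\otimes N^{op}$ on $B(H\otimes K)$ (with Hilbert–Schmidt inner product). The multi-edge indicator $\mathcal{P}_V$ is the projection in $M\otimes M^{op}\otimes N\otimes N^{op}$ such that $\pi(\mathcal{P}_V)$ is the orthogonal projection onto $V$. $\mathcal{S}_V=(\mathrm{id}\otimes\mathrm{id}\otimes\mathrm{tr}_K)(\mathrm{id}\otimes\mathrm{id}\otimes m)(\mathcal{P}_V)\in M\otimes M^{op}$, with $m(a\otimes b)=ab$ the multiplication of $N$. The quantum multi-adjacency operator $\mathcal{A}_{\mathcal{P}_V}:M\otimes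 N\to M\otimes N$ is $\mathcal{A}_{\mathcal{P}_V}(m\otimes n)=(\mathrm{tr}_H\otimes\mathrm{id}\otimes\mathrm{tr}_K\otimes\mathrm{id})(\mathcal{P}_V(m\otimes1\otimes n\otimes1))$ (product in $M\otimes M^{op}\otimes N\otimes N^{op}$, output identified with $M\otimes N$ as vector spaces); the weighted adjacency operator $\mathcal{A}_{\mathcal{S}_V}:M\to M$ is $\mathcal{A}_{\mathcal{S}_V}(m)=(\mathrm{tr}_H\otimes\mathrm{id})(\mathcal{S}_V(m\otimes1))$. $L^2(M)$, $L^2(N)$ are $M,N$ with Hilbert–Schmidt inner products from $\mathrm{tr}_H,\mathrm{tr}_K$; thus $\mathcal{A}_{\mathcal{P}_V}\in B(L^2(M))\otimes B(L^2(N))$, $\mathcal{A}_{\mathcal{S}_V}\in B(L^2(M))$, and $\mathrm{tr}_{L^2(N)}$ is the trace on $B(L^2(N))$. *)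

(* Finite-dimensional linear algebra over an algebraically
   closed numeric field C (e.g. the complex numbers).  All Hilbert spaces are
   H = C^h, K = C^k with the standard inner product; B(H) = 'M[C]_h. *)
From HB Require Import structures.
From mathcomp Require Import all_boot all_order all_algebra.
Set Implicit Arguments.
Unset Strict Implicit.
Unset Printing Implicit Defensive.
Import Order.TTheory GRing.Theory Num.Theory.
Local Open Scope ring_scope.

Definition I2 n := ('I_n * 'I_n)%type.
Notation T2 C m n := {ffun I2 m * I2 n -> C}.
Notation T3 C h k := {ffun I2 h * I2 h * I2 k -> C}.
Notation T4 C h k := {ffun I2 h * I2 h * I2 k * I2 k -> C}.

Section QMR.
Variable C : numClosedFieldType.

Definition adjmx n (A : 'M[C]_n) : 'M[C]_n := (map_mx (fun z => z^*) A)^T.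

Definition is_vNalg n (M : 'M[C]_n -> Prop) : Prop :=
  [/\ M 1%:M,
      (forall x y, M x -> M y -> M (x + y)),
      (forall (c : C) x, M x -> M (c *: x)),
      (forall x y, M x -> M y -> M (x *m y)) &
      (forall x, M x -> M (adjmx x))].

Definition commutant n (M : 'M[C]_n -> Prop) : 'M[C]_n -> Prop :=
  fun x => forall m, M m -> x *m m = m *m x.

Definition centre n (M : 'M[C]_n -> Prop) : 'M[C]_n -> Prop :=
  fun x => M x /\ commutant M x.

Definition minimally_represented n (M : 'M[C]_n -> Prop) : Prop :=
  forall x, commutant M x <-> centre M x.

(* Two-fold tensors.  An element of B(C^m) ⊗ B(C^n) is stored by its
   coefficients:  X = \sum X((a,b),(e,f)) E_ab ⊗ E_ef.                 *)


Definition c2 m n (X : T2 C m n) a b e f : C := X ((a, b), (e, f)).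

Definition tens2 m n (x : 'M[C]_m) (y : 'M[C]_n) : T2 C m n :=
  [ffun p => x p.1.1 p.1.2 * y p.2.1 p.2.2].

Definition mul2 m n (X Y : T2 C m n) : T2 C m n :=
  [ffun p => let: ((a, b), (e, f)) := p in
     \sum_(l1 < m) \sum_(l2 < n) c2 X a l1 e l2 * c2 Y l1 b l2 f].

(* product of B(C^m) ⊗ B(C^n)^op (opposite product in the second factor) *)
Definition mul2op m n (X Y : T2 C m n) : T2 C m n :=
  [ffun p => let: ((a, b), (c, d)) := p in
     \sum_(l1 < m) \sum_(l2 < n) c2 X a l1 l2 d * c2 Y l1 b c l2].

Definition hs2 m n (S T : T2 C m n) : C := \sum_p (S p)^* * T p.

Definition in_tens2 m n (A : 'M[C]_m -> Prop) (B : 'M[C]_n -> Prop)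
  (X : T2 C m n) : Prop :=
  exists s : seq ('M[C]_m * 'M[C]_n),
    (forall t, t \in s -> A t.1 /\ B t.2) /\
    X = \sum_(t <- s) tens2 t.1 t.2.

(* Four-fold tensors: elements of B(H) ⊗ B(H)^op ⊗ B(K) ⊗ B(K)^op,
   X = \sum X(a,b,c,d,e,f,g,i) E_ab ⊗ E_cd ⊗ E_ef ⊗ E_gi.               *)

Variables h k : nat.


Definition c4 (X : T4 C h k) a b c d e f g i : C :=
  X (((a, b), (c, d)), (e, f), (g, i)).

Definition tens4 (x1 x2 : 'M[C]_h) (x3 x4 : 'M[C]_k) : T4 C h k :=
  [ffun p => let: (((a, b), (c, d)), (e, f), (g, i)) := p in
     x1 a b * x2 c d * x3 e f * x4 g i].

Definition mul4 (X Y : T4 C h k) : T4 C h k :=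
  [ffun p => let: (((a, b), (c, d)), (e, f), (g, i)) := p in
     \sum_(l1 < h) \sum_(l2 < h) \sum_(l3 < k) \sum_(l4 < k)
        c4 X a l1 l2 d e l3 l4 i * c4 Y l1 b c l2 l3 f g l4].

Definition adj4 (X : T4 C h k) : T4 C h k :=
  [ffun p => let: (((a, b), (c, d)), (e, f), (g, i)) := p in
     (c4 X b a d c f e i g)^*].

Definition in_tens4 (M : 'M[C]_h -> Prop) (N : 'M[C]_k -> Prop) (X : T4 C h k)
  : Prop :=
  exists s : seq (('M[C]_h * 'M[C]_h) * ('M[C]_k * 'M[C]_k)),
    (forall t, t \in s -> [/\ M t.1.1, M t.1.2, N t.2.1 & N t.2.2]) /\
    X = \sum_(t <- s) tens4 t.1.1 t.1.2 t.2.1 t.2.2.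

(* Weaver action of B(H)⊗B(H)^op⊗B(K)⊗B(K)^op on B(H⊗K) = B(H)⊗B(K):
   pi(T1⊗T2⊗T3⊗T4)(S1⊗S2) = T1 S1 T2 ⊗ T3 S2 T4, extended linearly *)
Definition weaver (X : T4 C h k) (S : T2 C h k) : T2 C h k :=
  [ffun p => let: ((a, b), (e, f)) := p in
     \sum_(j1 < h) \sum_(i2 < h) \sum_(j3 < k) \sum_(i4 < k)
        c4 X a j1 i2 b e j3 i4 f * c2 S j1 i2 j3 i4].

Definition is_orth_proj (V : T2 C h k -> Prop) (f : T2 C h k -> T2 C h k) : Prop :=
  forall S, V (f S) /\ (forall v, V v -> hs2 v (S - f S) = 0).

Definition is_subspace (V : T2 C h k -> Prop) : Prop :=
  [/\ V 0,
      (forall x y, V x -> V y -> V (x + y)) &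
      (forall (c : C) x, V x -> V [ffun p => c * x p])].

Definition quantum_multi_relation (M : 'M[C]_h -> Prop) (N : 'M[C]_k -> Prop)
  (V : T2 C h k -> Prop) : Prop :=
  [/\ is_subspace V,
      (forall v, V v -> in_tens2 (fun _ => True) N v),
      (forall a v, commutant M a -> V v -> V (mul2 (tens2 a 1%:M) v)),
      (forall a v, commutant M a -> V v -> V (mul2 v (tens2 a 1%:M))) &
      (forall z v, centre N z -> V v -> V (mul2 (tens2 1%:M z) v))].


(* id ⊗ id ⊗ m,  m(x ⊗ y) = x y  (multiplication of N) *)
Definition idid_mult (X : T4 C h k) : T3 C h k :=
  [ffun p => let: ((a, b), (c, d), (e, f)) := p in
     \sum_(l < k) c4 X a b c d e l l f].

Definition idid_tr (Y : T3 C h k) : T2 C h h :=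
  [ffun p => let: ((a, b), (c, d)) := p in
     \sum_(e < k) Y ((a, b), (c, d), (e, e))].

Definition S_of (P : T4 C h k) : T2 C h h := idid_tr (idid_mult P).

(* weighted adjacency operator A_S(m) = (tr_H ⊗ id)(S (m ⊗ 1)),
   product taken in M ⊗ M^op; output in M^op identified with M *)
Definition A_S (S : T2 C h h) (m : 'M[C]_h) : 'M[C]_h :=
  let Z := mul2op S (tens2 m 1%:M) in
  \matrix_(c, d) \sum_(a < h) c2 Z a a c d.

(* quantum multi-adjacency operator
   A_P(m ⊗ n) = (tr_H ⊗ id ⊗ tr_K ⊗ id)(P (m ⊗ 1 ⊗ n ⊗ 1)),
   extended linearly to B(H) ⊗ B(K) (in particular to M ⊗ N);
   output in M^op ⊗ N^op identified with M ⊗ N as vector spaces *)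
Definition embed13 (S : T2 C h k) : T4 C h k :=
  [ffun p => let: (((a, b), (c, d)), (e, f), (g, i)) := p in
     c2 S a b e f * (c == d)%:R * (g == i)%:R].

Definition tr_id_tr_id (X : T4 C h k) : T2 C h k :=
  [ffun p => let: ((c, d), (g, i)) := p in
     \sum_(a < h) \sum_(e < k) c4 X a a c d e e g i].

Definition A_P (P : T4 C h k) (S : T2 C h k) : T2 C h k :=
  tr_id_tr_id (mul4 P (embed13 S)).

Definition id_pair (x : 'M[C]_k) (Y : T2 C h k) : 'M[C]_h :=
  \matrix_(a, b) \sum_(e < k) \sum_(f < k) (x e f)^* * c2 Y a b e f.

(* (id ⊗ tr_{L^2(N)})(A) for A an operator on L^2(M) ⊗ L^2(N), computed
   with an orthonormal basis (e_j)_j of L^2(N):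
   m |-> \sum_j (id ⊗ <e_j, .>)(A (m ⊗ e_j)) *)
Definition ptr_N d (e : 'I_d -> 'M[C]_k) (A : T2 C h k -> T2 C h k)
  (m : 'M[C]_h) : 'M[C]_h :=
  \sum_(j < d) id_pair (e j) (A (tens2 m (e j))).

Definition onb_of (N : 'M[C]_k -> Prop) d (e : 'I_d -> 'M[C]_k) : Prop :=
  [/\ (forall j, N (e j)),
      (forall i j, \tr (adjmx (e i) *m e j) = (i == j)%:R) &
      (forall n, N n -> exists c : 'I_d -> C, n = \sum_(j < d) c j *: e j)].

End QMR.

From HB Require Import structures.
From mathcomp Require Import all_boot all_order all_algebra ring.
Set Implicit Arguments.
Unset Strict Implicit.
Unset Printing Implicit Defensive.
Import GRing.Theory Num.Theory.
Local Open Scope ring_scope.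

(* Both sides are additive in P, and P is a sum of elementary tensors
   x1 ⊗ x2 ⊗ x3 ⊗ x4 with x4 ∈ N, so it suffices to compare them there.
   On such a tensor A_P (m ⊗ y) = tr(x1 m) tr(x3 y) x2 ⊗ x4, so the partial
   trace over the orthonormal basis (e_j) of L²(N) is
   tr(x1 m) (Σ_j <e_j, x4> tr(x3 e_j)) x2 = tr(x1 m) tr(x3 x4) x2, by
   expanding x4 in that basis; on the other side S = tr(x3 x4) x1 ⊗ x2, whose
   weighted adjacency operator sends m to the same matrix. *)

Lemma additive_sum (U V : zmodType) (f : U -> V) :
  {morph f : x y / x + y} ->
  forall (I : Type) (r : seq I) (P : pred I) (F : I -> U),
  f (\sum_(i <- r | P i) F i) = \sum_(i <- r | P i) f (F i).
Proof.
move=> fD; apply: big_morph => //.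
by apply: (addrI (f 0)); rewrite -fD !addr0.
Qed.

Section MultiAdjacency.
Variable C : numClosedFieldType.

Lemma kronecker_sumr n (F : 'I_n -> C) c : \sum_l F l * (c == l)%:R = F c.
Proof.
rewrite (bigD1 c) //= eqxx mulr1 big1 ?addr0 // => l /negbTE.
by rewrite eq_sym => ->; rewrite mulr0.
Qed.

Lemma mxtraceE n (x y : 'M[C]_n) : \tr (x *m y) = \sum_i \sum_j x i j * y j i.
Proof. by apply: eq_bigr => i _; rewrite mxE. Qed.

Lemma mxtrace_adjmx_mul n (x y : 'M[C]_n) :
  \tr (adjmx x *m y) = \sum_i \sum_j (x i j)^* * y i j.
Proof.
rewrite mxtraceE exchange_big; apply: eq_bigr => i _; apply: eq_bigr => j _.
by rewrite !mxE.
Qed.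

Lemma onb_expand n (N : 'M[C]_n -> Prop) d (e : 'I_d -> 'M[C]_n) y :
  onb_of N e -> N y -> y = \sum_j \tr (adjmx (e j) *m y) *: e j.
Proof.
case=> _ orth span /span [c ->]; apply: eq_bigr => j _; congr (_ *: _).
rewrite mulmx_sumr raddf_sum (bigD1 j) //= big1 => [|i /negbTE ij].
  by rewrite -scalemxAr linearZ /= orth eqxx mulr1 addr0.
by rewrite -scalemxAr linearZ /= orth eq_sym ij mulr0.
Qed.

Lemma onb_mxtrace_mul n (N : 'M[C]_n -> Prop) d (e : 'I_d -> 'M[C]_n) x y :
  onb_of N e -> N y ->
  \sum_j \tr (adjmx (e j) *m y) * \tr (x *m e j) = \tr (x *m y).
Proof.
move=> onb Ny; rewrite [in RHS](onb_expand onb Ny) mulmx_sumr raddf_sum.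
by apply: eq_bigr => j _; rewrite -scalemxAr /= mxtraceZ.
Qed.

Variables h k : nat.
Implicit Types (P : T4 C h k) (S : T2 C h k) (m : 'M[C]_h) (y : 'M[C]_k).

Lemma A_PE P S c d g i :
  A_P P S ((c, d), (g, i)) = \sum_a \sum_e \sum_l1 \sum_l3
     P (((a, l1), (c, d)), (e, l3), (g, i)) * S ((l1, a), (l3, e)).
Proof.
rewrite ffunE; apply: eq_bigr => a _; apply: eq_bigr => e _.
rewrite /c4 ffunE; apply: eq_bigr => l1 _.
under eq_bigr => l2 _ do under eq_bigr => l3 _ do
  (under eq_bigr => l4 _ do rewrite /c4 ffunE /c2 mulrA; rewrite kronecker_sumr mulrA).
by rewrite exchange_big; apply: eq_bigr => l3 _; rewrite kronecker_sumr.
Qed.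

Lemma A_SE (S : T2 C h h) m c d :
  A_S S m c d = \sum_a \sum_l S ((a, l), (c, d)) * m l a.
Proof.
rewrite mxE; apply: eq_bigr => a _; rewrite /c2 ffunE; apply: eq_bigr => l _.
by under eq_bigr => l' _ do rewrite /c2 ffunE mxE mulrA; rewrite kronecker_sumr.
Qed.

Lemma S_ofE P a b c d :
  S_of P ((a, b), (c, d)) = \sum_e \sum_l P (((a, b), (c, d)), (e, l), (l, e)).
Proof. by rewrite ffunE; apply: eq_bigr => e _; rewrite ffunE. Qed.

Lemma A_PDl P1 P2 S : A_P (P1 + P2) S = A_P P1 S + A_P P2 S.
Proof.
apply/ffunP => -[[c d] [g i]]; rewrite A_PE ffunE !A_PE -big_split.
do 3 (apply: eq_bigr => ? _; rewrite -big_split).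
by apply: eq_bigr => ? _; rewrite ffunE mulrDl.
Qed.

Lemma id_pairDr y (Y1 Y2 : T2 C h k) :
  id_pair y (Y1 + Y2) = id_pair y Y1 + id_pair y Y2.
Proof.
apply/matrixP => a b; rewrite !mxE -big_split.
apply: eq_bigr => e _; rewrite -big_split.
by apply: eq_bigr => f _; rewrite /c2 ffunE mulrDr.
Qed.

Lemma S_ofD P1 P2 : S_of (P1 + P2) = S_of P1 + S_of P2.
Proof.
apply/ffunP => -[[a b] [c d]]; rewrite S_ofE ffunE !S_ofE -big_split.
by apply: eq_bigr => e _; rewrite -big_split; apply: eq_bigr => l _; rewrite ffunE.
Qed.

Lemma A_SDl (S1 S2 : T2 C h h) m : A_S (S1 + S2) m = A_S S1 m + A_S S2 m.
Proof.
apply/matrixP => c d; rewrite A_SE mxE !A_SE -big_split.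
apply: eq_bigr => a _; rewrite -big_split.
by apply: eq_bigr => l _; rewrite ffunE mulrDl.
Qed.

Lemma A_P_tens4 (x1 x2 : 'M[C]_h) (x3 x4 : 'M[C]_k) m y :
  A_P (tens4 x1 x2 x3 x4) (tens2 m y)
  = tens2 ((\tr (x1 *m m) * \tr (x3 *m y)) *: x2) x4.
Proof.
apply/ffunP => -[[c d] [g i]]; rewrite A_PE ffunE mxE !mxtraceE -!mulrA.
rewrite mulr_suml; apply: eq_bigr => a _.
rewrite exchange_big mulr_suml; apply: eq_bigr => l1 _.
rewrite mulr_suml mulr_sumr; apply: eq_bigr => e _.
rewrite mulr_suml mulr_sumr; apply: eq_bigr => l3 _.
rewrite !ffunE /=; ring.
Qed.

Lemma id_pair_tens2 y (x1 : 'M[C]_h) (x2 : 'M[C]_k) :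
  id_pair y (tens2 x1 x2) = \tr (adjmx y *m x2) *: x1.
Proof.
apply/matrixP => a b; rewrite !mxE mxtrace_adjmx_mul mulr_suml.
apply: eq_bigr => e _; rewrite mulr_suml.
by apply: eq_bigr => f _; rewrite /c2 ffunE /=; ring.
Qed.

Lemma S_of_tens4 (x1 x2 : 'M[C]_h) (x3 x4 : 'M[C]_k) :
  S_of (tens4 x1 x2 x3 x4) = tens2 (\tr (x3 *m x4) *: x1) x2.
Proof.
apply/ffunP => -[[a b] [c d]]; rewrite S_ofE ffunE mxE mxtraceE -mulrA mulr_suml.
apply: eq_bigr => e _; rewrite mulr_suml.
by apply: eq_bigr => l _; rewrite ffunE /=; ring.
Qed.

Lemma A_S_tens2 (x1 x2 : 'M[C]_h) m : A_S (tens2 x1 x2) m = \tr (x1 *m m) *: x2.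
Proof.
apply/matrixP => c d; rewrite A_SE mxE mxtraceE mulr_suml.
apply: eq_bigr => a _; rewrite mulr_suml.
by apply: eq_bigr => l _; rewrite ffunE /=; ring.
Qed.

Variables (N : 'M[C]_k -> Prop) (d : nat) (e : 'I_d -> 'M[C]_k).
Hypothesis e_onb : onb_of N e.

Lemma ptr_N_A_PDl m :
  {morph (fun P => ptr_N e (A_P P) m) : P1 P2 / P1 + P2}.
Proof.
by move=> P1 P2; rewrite -big_split; apply: eq_bigr => j _; rewrite A_PDl id_pairDr.
Qed.

Lemma A_S_S_ofDl m : {morph (fun P => A_S (S_of P) m) : P1 P2 / P1 + P2}.
Proof. by move=> P1 P2; rewrite /= S_ofD A_SDl. Qed.

Lemma ptr_N_A_P_tens4 (x1 x2 : 'M[C]_h) (x3 x4 : 'M[C]_k) m :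
  N x4 ->
  ptr_N e (A_P (tens4 x1 x2 x3 x4)) m = (\tr (x1 *m m) * \tr (x3 *m x4)) *: x2.
Proof.
move=> Nx4; rewrite /ptr_N.
under eq_bigr => j _ do rewrite A_P_tens4 id_pair_tens2 scalerA.
rewrite -scaler_suml -(onb_mxtrace_mul x3 e_onb Nx4) mulr_sumr.
by congr (_ *: _); apply: eq_bigr => j _; rewrite mulrCA.
Qed.

Lemma A_S_S_of_tens4 (x1 x2 : 'M[C]_h) (x3 x4 : 'M[C]_k) m :
  A_S (S_of (tens4 x1 x2 x3 x4)) m = (\tr (x1 *m m) * \tr (x3 *m x4)) *: x2.
Proof. by rewrite S_of_tens4 A_S_tens2 -scalemxAl mxtraceZ mulrC. Qed.

End MultiAdjacency.

Theorem proposition4p12 (C : numClosedFieldType) (h k : nat)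
  (M : 'M[C]_h -> Prop) (N : 'M[C]_k -> Prop) (V : T2 C h k -> Prop)
  (P : T4 C h k) (d : nat) (e : 'I_d -> 'M[C]_k) :
  is_vNalg M -> is_vNalg N ->
  minimally_represented M -> minimally_represented N ->
  quantum_multi_relation M N V ->
  (* P = P_V : the projection in M ⊗ M^op ⊗ N ⊗ N^op with pi(P) = proj_V *)
  in_tens4 M N P -> mul4 P P = P -> adj4 P = P ->
  is_orth_proj V (weaver P) ->
  onb_of N e ->
  forall m, M m -> ptr_N e (A_P P) m = A_S (S_of P) m.
Proof.
move=> _ _ _ _ _ [s [s_in ->]] _ _ _ onb m _.
rewrite (additive_sum (ptr_N_A_PDl e m)) (additive_sum (A_S_S_ofDl m)).
apply: eq_big_seq => -[[x1 x2] [x3 x4]] /s_in [_ _ _ Nx4].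
by rewrite (ptr_N_A_P_tens4 onb) // A_S_S_of_tens4.
Qed.
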